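(* Let $G$ be a connected graph, $v_{\mathsf{init}}\in V(G)$, and $\mathsf{VC}$ a vertex cover of $G$ with $v_{\mathsf{init}}\in\mathsf{VC}$. Let $\widehat{E}$ be a multiset with elements from $E(G)$ such that $\mathsf{Graph}(\widehat{E})$ is connected, $v_{\mathsf{init}}\in V(\mathsf{Graph}(\widehat{E}))$, every vertex of $\mathsf{Graph}(\widehat{E})$ has even degree, and every edge appears at most twice in $\widehat{E}$. Then there exist a sub-multiset $\mathsf{CC}\subseteq\widehat{E}$ and a multiset $\mathcal{C}$ of cycles in $\mathsf{Graph}(\widehat{E})$ such that: (1) $\mathsf{Graph}(\mathsf{CC})$ is a $\overline{G}$-submultigraph, i.e., for every equivalence class $u^*\in\mathsf{EQ}$, $|V(\mathsf{Graph}(\mathsf{CC}))\cap u^*|\le\mathsf{NumVer}(u^* )$; (2) $\mathsf{Graph}(\mathsf{CC})$ is connected, $v_{\mathsf{init}}\in V(\mathsf{Graph}(\mathsf{CC}))$, and every vertex of $\mathsf{Graph}(\mathsf{CC})$ has even degree in it; (3) $V(\mathsf{Graph}(\mathsf{CC}))\cap\mathsf{VC}=V(\mathsf{Graph}(\widehat{E}))\cap\mathsf{VC}$; (4) at most $2|\mathsf{VC}|^2$ cycles in $\mathcal{C}$ have length other than $4$; (5) the cycles in $\mathcal{C}$ of length other than $4$ are simple; (6) the multiset sum $\mathsf{CC}\uplus\biguplus_{C\in\mathcal{C}}E(C)$ equals $\widehat{E}$.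
   Context: For a multiset $\widehat{E}$ of edges, $\mathsf{Graph}(\widehat{E})$ is the multigraph whose vertices are the endpoints of edges of $\widehat{E}$ and whose edge multiset is $\widehat{E}$; degrees count multiplicity. Paths/cycles: a path is a sequence $(v_0,\dots,v_\ell)$ with consecutive vertices adjacent (repetitions allowed), length $\ell$; a cycle has $v_0=v_\ell$; it is simple if $v_0,\dots,v_{\ell-1}$ are distinct; $E(C)$ is the multiset of traversed edges. Let $\mathsf{IND}=V(G)\setminus\mathsf{VC}$. Two vertices $u,v\in\mathsf{IND}$ are equivalent if $N_G(u)=N_G(v)$; $\mathsf{EQ}$ is the set of equivalence classes. The equivalence graph $G^*$ has vertex set $\mathsf{VC}\cup\mathsf{EQ}$ (classes as single vertices), with edges $\{u,v\}\in E(G)$ for $u,v\in\mathsf{VC}$, and edges $\{u^*,v\}$ for $u^*\in\mathsf{EQ}$, $v\in\mathsf{VC}$ whenever some $u\in u^*$ has $\{u,v\}\in E(G)$. For $u^*\in\mathsf{EQ}$, $\mathsf{NumVer}(u^* )=\min\{|u^*|,\,2^{|N_{G^*}(u^* )|}+|\mathsf{VC}|^2\}$. *)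

From mathcomp Require Import all_boot.
Set Implicit Arguments. Unset Strict Implicit. Unset Printing Implicit Defensive.

(* A simple graph G on a finite vertex type T is a symmetric irreflexive
   relation e.
   A multiset of edges is a sequence of edges, considered up to permutation
   (multiplicities = count_mem). *)

Section Defs.
Variable T : finType.

Definition edge_of (e : rel T) (f : {set T}) : bool :=
  [exists x, exists y, e x y && (f == [set x; y])].

Definition graph_connected (e : rel T) : Prop := forall x y : T, connect e x y.

Definition vertex_cover (e : rel T) (VC : {set T}) : Prop :=
  forall x y, e x y -> (x \in VC) || (y \in VC).

Definition gV (s : seq {set T}) : {set T} := \bigcup_(f <- s) f.
Definition gadj (s : seq {set T}) : rel T :=
  fun x y => (x != y) && ([set x; y] \in s).
Definition gdeg (s : seq {set T}) (v : T) : nat := count (fun f : {set T} => v \in f) s.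
Definition g_connected (s : seq {set T}) : Prop :=
  forall x y, x \in gV s -> y \in gV s -> connect (gadj s) x y.
Definition g_even (s : seq {set T}) : Prop :=
  forall v, v \in gV s -> ~~ odd (gdeg s v).
Definition submultiset (s1 s2 : seq {set T}) : Prop :=
  forall f, count_mem f s1 <= count_mem f s2.

(* Paths/cycles given as vertex sequences (v_0, ..., v_l) *)
Definition clength (c : seq T) : nat := (size c).-1.
Definition is_cycle_in (s : seq {set T}) (c : seq T) : bool :=
  if c is v0 :: r then path (gadj s) v0 r && (last v0 r == v0) else false.
Definition simple_cycle (c : seq T) : bool :=
  if c is v0 :: r then uniq (belast v0 r) else false.
Definition cycle_edges (c : seq T) : seq {set T} :=
  if c is v0 :: r then pairmap (fun x y => [set x; y]) v0 r else [::].

Definition nbhd (e : rel T) (u : T) : {set T} := [set v | e u v].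
Definition eq_class (e : rel T) (VC : {set T}) (u : T) : {set T} :=
  [set w in ~: VC | nbhd e w == nbhd e u].
Definition EQ (e : rel T) (VC : {set T}) : {set {set T}} :=
  [set eq_class e VC u | u in ~: VC].
Definition nbhd_star (e : rel T) (VC : {set T}) (U : {set T}) : {set T} :=
  [set v in VC | [exists u in U, e u v]].
Definition NumVer (e : rel T) (VC : {set T}) (U : {set T}) : nat :=
  minn #|U| (2 ^ #|nbhd_star e VC U| + #|VC| ^ 2).

End Defs.

(* Call a vertex free if it lies outside the vertex cover VC and is not
   one of the at most |VC|^2 "witnesses": for every pair a, b of cover vertices
   we fix one non-cover common neighbour of a and b in Graph(Ehat).  As long as
   two distinct free vertices u, u' of the current multigraph have the same
   neighbourhood, they lie on a square a u b u' a (evenness provides two edges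
   at u, possibly one doubled edge), and we remove its four edges.  Removing a
   closed walk keeps every degree even, and edges without a free end are never
   touched, so cover vertices, witnesses and the edges among them survive; this
   keeps Graph(CC) connected and keeps its cover vertices.  When the process
   stops, the free vertices of a class U of equivalent vertices have pairwise
   distinct neighbourhoods inside N(U), so there are at most 2^|N(U)| of them,
   plus at most |VC|^2 witnesses.  All removed cycles have length 4. *)

From mathcomp Require Import all_boot.
Set Implicit Arguments. Unset Strict Implicit. Unset Printing Implicit Defensive.

Section Multigraphs.
Variable T : finType.
Implicit Types (s : seq {set T}) (f : {set T}) (u v x y a b : T).

Lemma mem_gV s x : (x \in gV s) = has (fun f => x \in f) s.
Proof.
rewrite /gV; elim: s => [|f s IH]; first by rewrite big_nil in_set0.
by rewrite big_cons in_setU IH.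
Qed.

Lemma gadj_sym s : symmetric (gadj s).
Proof. by move=> x y; rewrite /gadj eq_sym setUC. Qed.

Lemma gadj_gV s x y : gadj s x y -> x \in gV s.
Proof.
by case/andP=> _ xys; rewrite mem_gV; apply/hasP; exists [set x; y]; rewrite ?set21.
Qed.

Lemma gdeg0 s v : v \notin gV s -> gdeg s v = 0.
Proof. by rewrite mem_gV has_count -eqn0Ngt => /eqP. Qed.

Lemma gdeg_cat s1 s2 v : gdeg (s1 ++ s2) v = gdeg s1 v + gdeg s2 v.
Proof. exact: count_cat. Qed.

Lemma gdeg_perm s1 s2 v : perm_eq s1 s2 -> gdeg s1 v = gdeg s2 v.
Proof. by move/permP; apply. Qed.

Lemma odd_gdeg_walk x r v : path (fun x y => x != y) x r ->
  odd (gdeg (cycle_edges (x :: r)) v) = (v == x) (+) (v == last x r).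
Proof.
elim: r x => [|y r IH] x; first by rewrite /= addbb.
case/andP=> xy walk_r.
have -> : gdeg (cycle_edges [:: x, y & r]) v =
  (v \in [set x; y]) + gdeg (cycle_edges (y :: r)) v by [].
rewrite oddD IH // in_set2 /=.
case: (eqVneq v x) => [->|_]; first by rewrite (negbTE xy).
by rewrite oddb addbA addbb.
Qed.

Lemma even_gdeg_cycle s c v : is_cycle_in s c -> ~~ odd (gdeg (cycle_edges c) v).
Proof.
case: c => [|x r] //= /andP[walk /eqP closed].
rewrite odd_gdeg_walk ?closed ?addbb //.
by apply: sub_path walk => y z /andP[].
Qed.

Lemma extract_two_edges s u a b : gadj s u a -> gadj s u b ->
  a != b \/ 1 < count_mem [set u; a] s ->
  exists s1, perm_eq s ([set a; u] :: [set u; b] :: s1).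
Proof.
move=> /andP[ua uas] /andP[ub ubs] two.
have au_s : [set a; u] \in s by rewrite setUC.
have P1 := perm_to_rem au_s.
suff ub_rem : [set u; b] \in rem [set a; u] s.
  exists (rem [set u; b] (rem [set a; u] s)).
  by rewrite (perm_trans P1) // perm_cons perm_to_rem.
have := (permP P1) (pred1 [set u; b]); rewrite /= -has_pred1 has_count.
case: eqP => [au_ub|_] /= count_ub; last first.
  by move: count_ub; rewrite add0n => <-; rewrite -has_count has_pred1.
have ab : a = b.
  by apply/eqP; have := set21 a u; rewrite au_ub in_set2 eq_sym (negbTE ua).
subst b; case: two => [aa|]; first by rewrite eqxx in aa.
by rewrite count_ub -[X in X < _]addn0 ltn_add2l.
Qed.

Lemma extract_square s u u' a b : u != u' ->
  gadj s u a -> gadj s u b -> gadj s u' a -> gadj s u' b ->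
  a != b \/ 1 < count_mem [set u; a] s /\ 1 < count_mem [set u'; a] s ->
  exists s2, perm_eq s (cycle_edges [:: a; u; b; u'; a] ++ s2).
Proof.
move=> uu' ua ub u'a u'b two.
have [s1 P1] : exists s1, perm_eq s ([set a; u] :: [set u; b] :: s1).
  by apply: extract_two_edges => //; case: two => [|[]]; [left | right].
have count_s1 f : u \notin f -> count_mem f s1 = count_mem f s.
  move=> uf; rewrite ((permP P1) (pred1 f)) /=.
  have notf (g : {set T}) : u \in g -> (g == f) = false.
    by move=> ug; apply: contraNF uf => /eqP <-.
  by rewrite notf ?set22 // notf ?set21.
have u_out z : gadj s u z -> u \notin [set u'; z].
  by case/andP=> uz _; rewrite in_set2 negb_or uu'.
have to_s1 z : gadj s u z -> gadj s u' z -> gadj s1 u' z.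
  move=> uz /andP[u'z zs]; rewrite /gadj u'z -has_pred1 has_count count_s1 ?u_out //.
  by rewrite -has_count has_pred1.
have [s2 P2] : exists s2, perm_eq s1 ([set b; u'] :: [set u'; a] :: s2).
  apply: extract_two_edges; rewrite ?to_s1 //.
  case: two => [ab|[_ two']]; first by left; rewrite eq_sym.
  by case: (eqVneq b a) => [->|]; [right; rewrite count_s1 ?u_out | left].
by exists s2; rewrite (perm_trans P1) //= !perm_cons.
Qed.

End Multigraphs.

Section GraphEdges.
Variables (T : finType) (e : rel T).
Hypotheses (e_sym : symmetric e) (e_irr : irreflexive e).
Implicit Types (s : seq {set T}) (f : {set T}) (u v x y a : T).

Lemma edge_ofP f u : edge_of e f -> u \in f -> exists2 v, e u v & f = [set u; v].
Proof.
case/existsP=> x /existsP[y /andP[exy /eqP ->]].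
by rewrite in_set2 => /orP[]/eqP->; [exists y | exists x; rewrite 1?e_sym 1?setUC].
Qed.

Lemma gadj_of_mem s f u : all (edge_of e) s -> f \in s -> u \in f ->
  exists2 v, gadj s u v & f = [set u; v].
Proof.
move=> /allP edges fs uf; have [v euv fE] := edge_ofP (edges f fs) uf.
exists v => //; rewrite /gadj -fE fs andbT.
by apply: contraTneq euv => ->; rewrite e_irr.
Qed.

Lemma gadj_edge s x y : all (edge_of e) s -> gadj s x y -> e x y.
Proof.
move=> edges /andP[xy xys].
have [v exv /setP xyE] := edge_ofP (allP edges _ xys) (set21 x y).
have := xyE y; rewrite !in_set2 eqxx orbT eq_sym (negbTE xy) /=.
by move/esym/eqP->.
Qed.

Lemma doubled_edge s u a : all (edge_of e) s -> gadj s u a ->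
  (forall b, gadj s u b -> b = a) -> ~~ odd (gdeg s u) ->
  1 < count_mem [set u; a] s.
Proof.
move=> edges ua only_a even_u.
have deg_u : gdeg s u = count_mem [set u; a] s.
  apply: eq_in_count => f fs /=; apply/idP/eqP => [uf|->]; last exact: set21.
  by have [v /only_a -> ->] := gadj_of_mem edges fs uf.
have : 0 < count_mem [set u; a] s by rewrite -has_count has_pred1; case/andP: ua.
by move: even_u; rewrite deg_u; case: (count_mem _ _) => [|[|]].
Qed.

End GraphEdges.

Section Peeling.
Variables (T : finType) (e : rel T) (VC : {set T}) (Ehat : seq {set T}).
Hypotheses (e_sym : symmetric e) (e_irr : irreflexive e).
Hypotheses (VC_cover : vertex_cover e VC) (Ehat_edges : all (edge_of e) Ehat).
Hypotheses (Ehat_conn : g_connected Ehat) (Ehat_even : g_even Ehat).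
Implicit Types (s : seq {set T}) (Cs : seq (seq T)) (f : {set T}) (u v w x y a b : T).

Definition witness a b : option T :=
  [pick w | (w \notin VC) && gadj Ehat a w && gadj Ehat w b].

Definition witnesses : {set T} :=
  [set w | Some w \in [set witness p.1 p.2 | p in setX VC VC]].

Lemma card_witnesses : #|witnesses| <= #|VC| ^ 2.
Proof.
rewrite -(card_imset witnesses (@Some_inj _ : injective (@Some T))) -mulnn -cardsX.
apply: leq_trans (subset_leq_card _) (leq_imset_card (fun p => witness p.1 p.2) _).
by apply/subsetP => o /imsetP[w]; rewrite inE => ? ->.
Qed.

Lemma witnessP a b w : a \in VC -> b \in VC -> w \notin VC ->
  gadj Ehat a w -> gadj Ehat w b ->
  exists k, [/\ k \in witnesses, gadj Ehat a k & gadj Ehat k b].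
Proof.
move=> aV bV wV aw wb.
case def_k: (witness a b) => [k|]; have := def_k; rewrite /witness.
  case: pickP => // k' /andP[/andP[_ ak] kb] [k'k]; subst k'; exists k; split => //.
  by rewrite inE -def_k; apply/imsetP; exists (a, b); rewrite ?in_setX ?aV.
by case: pickP => // /(_ w); rewrite wV aw wb.
Qed.

(* A vertex is free if it is neither in the cover nor a witness; only edges at
   free vertices are ever removed. *)
Definition free w : bool := (w \notin VC) && (w \notin witnesses).

Lemma cover_not_free x : x \in VC -> ~~ free x.
Proof. by rewrite /free => ->. Qed.

Definition square_in_Ehat (c : seq T) : bool := is_cycle_in Ehat c && (clength c == 4).

Definition peeled s Cs : Prop :=
  [/\ perm_eq (s ++ flatten (map (@cycle_edges T) Cs)) Ehat,
      all square_in_Ehat Cs,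
      (forall f, (forall w, w \in f -> ~~ free w) -> count_mem f s = count_mem f Ehat)
    & (forall v, ~~ odd (gdeg s v))].

Lemma peeled_init : peeled Ehat [::].
Proof.
split => //; first by rewrite cats0.
by move=> v; case: (boolP (v \in gV Ehat)) => [/Ehat_even | /gdeg0 ->].
Qed.

Lemma gadj_cover x y : gadj Ehat x y -> (x \in VC) || (y \in VC).
Proof. by move/(gadj_edge e_sym Ehat_edges); apply: VC_cover. Qed.

Definition anchor x : T := if x \in VC then x else odflt x [pick c | gadj Ehat x c].

Lemma anchor_out x y : x \notin VC -> gadj Ehat x y ->
  gadj Ehat x (anchor x) /\ anchor x \in VC.
Proof.
rewrite /anchor => /negbTE xV xy; rewrite xV.
case: pickP => [c /= xc | /(_ y)]; last by rewrite xy.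
by split => //; move: (gadj_cover xc); rewrite xV.
Qed.

Definition terminal s : Prop :=
  {in [pred u | free u && (u \in gV s)] &, injective (nbhd (gadj s))}.

Section PeeledState.
Variables (s : seq {set T}) (Cs : seq (seq T)).
Hypothesis peel : peeled s Cs.

Lemma peeled_sub f : f \in s -> f \in Ehat.
Proof. by case: peel => P _ _ _ fs; rewrite -(perm_mem P) mem_cat fs. Qed.

Lemma peeled_edges : all (edge_of e) s.
Proof. by apply/allP => f /peeled_sub; apply: (allP Ehat_edges). Qed.

Lemma peeled_gadj x y : gadj s x y -> gadj Ehat x y.
Proof. by case/andP=> xy /peeled_sub xyE; rewrite /gadj xy. Qed.

Lemma peeled_gV x : x \in gV s -> x \in gV Ehat.
Proof. by rewrite !mem_gV => /hasP[f /peeled_sub fE xf]; apply/hasP; exists f. Qed.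

Lemma peeled_keep x y : ~~ free x -> ~~ free y -> gadj Ehat x y -> gadj s x y.
Proof.
case: peel => _ _ kept _ fx fy /andP[xy xyE].
rewrite /gadj xy -has_pred1 has_count kept -?has_count ?has_pred1 //.
by move=> w; rewrite in_set2 => /orP[]/eqP->.
Qed.

(* Two cover vertices at distance two through a non-cover vertex in Ehat
   remain at distance two in s, through their witness. *)
Lemma peeled_witness a b w : a \in VC -> b \in VC -> w \notin VC ->
  gadj Ehat a w -> gadj Ehat w b -> exists2 k, gadj s a k & gadj s k b.
Proof.
move=> aV bV wV aw wb; have [k [kW ak kb]] := witnessP aV bV wV aw wb.
have kN : ~~ free k by rewrite /free kW andbF.
by exists k; apply: peeled_keep => //; exact: cover_not_free.
Qed.

Lemma peeled_VC_vertex a : a \in VC -> a \in gV Ehat -> a \in gV s.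
Proof.
move=> aV; rewrite mem_gV => /hasP[f fE af].
have [v av _] := gadj_of_mem e_sym e_irr Ehat_edges fE af.
case: (boolP (v \in VC)) => vV.
  by apply: (@gadj_gV _ _ _ v); apply: peeled_keep => //; exact: cover_not_free.
have va : gadj Ehat v a by rewrite gadj_sym.
have [k ak _] := peeled_witness aV aV vV av va.
exact: gadj_gV ak.
Qed.

Lemma anchor_edge x y : gadj Ehat x y -> connect (gadj s) (anchor x) (anchor y).
Proof.
have s_sym := sym_connect_sym (gadj_sym s).
wlog xV : x y / x \in VC => [wlog_xV xy|].
  case/orP: (gadj_cover xy) => [/wlog_xV|yV]; first exact.
  by rewrite s_sym; apply: wlog_xV yV _; rewrite gadj_sym.
have anchor_x : anchor x = x by rewrite /anchor xV.
rewrite anchor_x => xy; case: (boolP (y \in VC)) => yV.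
  rewrite /anchor yV; apply: connect1; apply: peeled_keep => //; exact: cover_not_free.
have yx : gadj Ehat y x by rewrite gadj_sym.
have [yc cV] := anchor_out yV yx.
have [k xk kc] := peeled_witness xV cV yV xy yc.
exact: connect_trans (connect1 xk) (connect1 kc).
Qed.

Lemma connect_anchor x y :
  connect (gadj Ehat) x y -> connect (gadj s) (anchor x) (anchor y).
Proof.
case/connectP=> p + ->; elim: p x => [|z p IH] x //= /andP[xz /IH].
exact/connect_trans/anchor_edge.
Qed.

Lemma connect_to_anchor x : x \in gV s -> connect (gadj s) x (anchor x).
Proof.
case: (boolP (x \in VC)) => [xV _|xV]; first by rewrite /anchor xV.
rewrite mem_gV => /hasP[f fs xf].
have [v xv _] := gadj_of_mem e_sym e_irr peeled_edges fs xf.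
have xvE := peeled_gadj xv.
have vV : v \in VC by move: (gadj_cover xvE); rewrite (negbTE xV).
have [xc cV] := anchor_out xV xvE.
have vx : gadj Ehat v x by rewrite gadj_sym.
have [k vk kc] := peeled_witness vV cV xV vx xc.
exact: connect_trans (connect1 xv) (connect_trans (connect1 vk) (connect1 kc)).
Qed.

(* Graph(s) stays connected: any two vertices reach their anchors, and the
   anchors are connected because Graph(Ehat) is. *)
Lemma peeled_connected : g_connected s.
Proof.
move=> x y xs ys; have s_sym := sym_connect_sym (gadj_sym s).
apply: connect_trans (connect_to_anchor xs) _; rewrite s_sym.
apply: connect_trans (connect_to_anchor ys) _; rewrite s_sym.
by apply: connect_anchor; apply: Ehat_conn; apply: peeled_gV.
Qed.

Lemma peeled_remove_square c s2 : perm_eq s (cycle_edges c ++ s2) ->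
  square_in_Ehat c -> (forall f, f \in cycle_edges c -> exists2 w, w \in f & free w) ->
  peeled s2 (c :: Cs).
Proof.
case: peel => P squares kept even Ps2 c_sq c_free; split.
- apply: perm_trans P; rewrite /= catA perm_cat2r perm_sym.
  by rewrite (perm_trans Ps2) // perm_catC.
- by rewrite /= c_sq.
- move=> f no_free; rewrite -kept // ((permP Ps2) (pred1 f)) count_cat.
  suff /count_memPn -> : f \notin cycle_edges c by [].
  by apply/negP => /c_free[w wf]; apply/negP/no_free.
- move=> v; have := even v; rewrite (gdeg_perm v Ps2) gdeg_cat oddD.
  by case/andP: c_sq => c_cyc _; rewrite (negbTE (even_gdeg_cycle v c_cyc)).
Qed.

Lemma peeled_step u u' : u != u' -> free u -> free u' -> u \in gV s ->
  nbhd (gadj s) u = nbhd (gadj s) u' ->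
  exists s' c, peeled s' (c :: Cs) /\ size s' < size s.
Proof.
move=> uu' fu fu' us same_nbhd.
have nbr z : gadj s u z = gadj s u' z by have /setP/(_ z) := same_nbhd; rewrite !inE.
have [a ua] : exists a, gadj s u a.
  move: us; rewrite mem_gV => /hasP[f fs uf].
  by have [a ua _] := gadj_of_mem e_sym e_irr peeled_edges fs uf; exists a.
(* A second neighbour b of u, or else the only neighbour a, doubled at u and u'. *)
have [b [ub two]] : exists b, gadj s u b /\
    (a != b \/ 1 < count_mem [set u; a] s /\ 1 < count_mem [set u'; a] s).
  case: (boolP [exists b, gadj s u b && (b != a)]).
    by case/existsP=> b /andP[ub ba]; exists b; split => //; left; rewrite eq_sym.
  move/existsPn=> only_a.
  have {}only_a b : gadj s u b -> b = a.
    by move=> ub; apply/eqP; move: (only_a b); rewrite ub negbK.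
  have only_a' b : gadj s u' b -> b = a by rewrite -nbr; apply: only_a.
  have u'a : gadj s u' a by rewrite -nbr.
  case: peel => _ _ _ even; exists a; split => //; right.
  by split; apply: (doubled_edge e_sym e_irr peeled_edges).
have [u'a u'b] : gadj s u' a /\ gadj s u' b by rewrite -!nbr.
have [s2 Ps2] := extract_square uu' ua ub u'a u'b two.
exists s2, [:: a; u; b; u'; a]; split; last first.
  by rewrite (perm_size Ps2) size_cat -[X in X < _]add0n ltn_add2r.
apply: peeled_remove_square Ps2 _ _.
  rewrite /square_in_Ehat /is_cycle_in /= eqxx !andbT.
  by rewrite !peeled_gadj // gadj_sym.
move=> f; rewrite !inE => /or4P[]/eqP->;
  by [exists u; rewrite ?set21 ?set22 | exists u'; rewrite ?set21 ?set22].
Qed.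

Lemma peeled_submultiset : submultiset s Ehat.
Proof. by case: peel => P _ _ _ f; rewrite -((permP P) (pred1 f)) count_cat leq_addr. Qed.

Lemma peeled_cover_vertices : gV s :&: VC = gV Ehat :&: VC.
Proof.
apply/setP => x; rewrite !inE; case: (boolP (x \in VC)) => xV; rewrite ?andbT ?andbF //.
by apply/idP/idP; [apply: peeled_gV | apply: peeled_VC_vertex].
Qed.

Lemma peeled_square_length c : c \in Cs -> clength c = 4.
Proof. by case: peel => _ /allP squares _ _ /squares/andP[_ /eqP]. Qed.

(* In a terminal state each class of equivalent vertices keeps at most
   2^|N(U)| free vertices plus the witnesses. *)
Lemma terminal_class_bound U : terminal s -> U \in EQ e VC ->
  #|gV s :&: U| <= NumVer e VC U.
Proof.
move=> term /imsetP[u0 _ ->]; set U0 := eq_class e VC u0.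
have U0_out w : w \in U0 -> w \notin VC by rewrite inE in_setC => /andP[].
rewrite /NumVer leq_min subset_leq_card ?subsetIr //=.
rewrite -(cardsID witnesses (gV s :&: U0)) addnC leq_add //; last first.
  exact: leq_trans (subset_leq_card (subsetIr _ _)) card_witnesses.
set A := (gV s :&: U0) :\: witnesses.
have A_free : {subset A <= [pred w | free w && (w \in gV s)]}.
  move=> w; rewrite in_setD in_setI => /and3P[wW ws wU0].
  by rewrite inE /free U0_out // wW.
rewrite -(card_in_imset (sub_in2 A_free term)) -card_powerset subset_leq_card //.
apply/subsetP => _ /imsetP[u uA ->]; rewrite powersetE; apply/subsetP => v.
rewrite inE => /(gadj_edge e_sym peeled_edges) euv.
have uU0 : u \in U0 by move: uA; rewrite in_setD in_setI => /and3P[].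
have := VC_cover euv; rewrite (negbTE (U0_out u uU0)) /= => vV.
by rewrite inE vV; apply/existsP; exists u; rewrite uU0.
Qed.

End PeeledState.

Lemma peeled_reduce s Cs : peeled s Cs -> exists s' Cs', peeled s' Cs' /\ terminal s'.
Proof.
have [n] := ubnP (size s); elim: n s Cs => // n IH s Cs /ltnSE s_n peel.
case: (boolP [exists u, exists u', [&& u != u', free u, free u', u \in gV s &
                                     nbhd (gadj s) u == nbhd (gadj s) u']]).
  case/existsP=> u /existsP[u' /and5P[uu' fu fu' us /eqP same]].
  have [s' [c [peel' lt]]] := peeled_step peel uu' fu fu' us same.
  exact: IH s' (c :: Cs) (leq_trans lt s_n) peel'.
move/existsPn=> none; exists s, Cs; split => // u u'; rewrite !inE.
move=> /andP[fu us] /andP[fu' _] same; apply/eqP; apply: contraT => uu'.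
by have /existsPn/(_ u') := none u; rewrite uu' fu fu' us same eqxx.
Qed.

End Peeling.

Theorem mainTheorem9 (T : finType) (e : rel T)
  (e_sym : symmetric e) (e_irr : irreflexive e)
  (G_conn : graph_connected e)
  (v_init : T) (VC : {set T})
  (VC_cover : vertex_cover e VC) (v_init_VC : v_init \in VC)
  (Ehat : seq {set T})
  (Ehat_edges : all (edge_of e) Ehat)
  (Ehat_conn : g_connected Ehat)
  (v_init_Ehat : v_init \in gV Ehat)
  (Ehat_even : g_even Ehat)
  (Ehat_twice : forall f : {set T}, count_mem f Ehat <= 2) :
  exists (CC : seq {set T}) (Cs : seq (seq T)),
    submultiset CC Ehat /\
    all (is_cycle_in Ehat) Cs /\
    (forall U, U \in EQ e VC -> #|gV CC :&: U| <= NumVer e VC U) /\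
    (g_connected CC /\ v_init \in gV CC /\ g_even CC) /\
    gV CC :&: VC = gV Ehat :&: VC /\
    count (fun c => clength c != 4) Cs <= 2 * #|VC| ^ 2 /\
    (forall c, c \in Cs -> clength c != 4 -> simple_cycle c) /\
    perm_eq (CC ++ flatten (map (@cycle_edges T) Cs)) Ehat.
Proof.
have [s [Cs [peel term]]] :=
  peeled_reduce e_sym e_irr Ehat_edges (peeled_init VC Ehat_even).
have [decomp squares _ even_s] := peel.
(* Every removed cycle is a square, so conditions (4) and (5) are immediate. *)
have len4 := peeled_square_length peel.
have no_long : count (fun c => clength c != 4) Cs = 0.
  by rewrite (eq_in_count (a2 := pred0)) ?count_pred0 // => c /len4 ->.
exists s, Cs; split; first exact: peeled_submultiset peel.
split; first by apply/allP => c /(allP squares)/andP[].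
split; first by move=> U; exact: (terminal_class_bound e_sym VC_cover Ehat_edges peel term).
split; first split.
- exact: (peeled_connected e_sym e_irr VC_cover Ehat_edges Ehat_conn peel).
- split; first exact: (peeled_VC_vertex e_sym e_irr Ehat_edges peel v_init_VC v_init_Ehat).
  by move=> v _; apply: even_s.
split; first exact: (peeled_cover_vertices e_sym e_irr Ehat_edges peel).
split; first by rewrite no_long.
by split => // c /len4 ->.
Qed.
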